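(* Let $\Gamma$ be a weighted digraph with vertex set $\{1,\dots,n\}$, $n>1$, without loops and with strictly positive arc weights, with Laplacian matrix $L$, matrices of in-forests $Q_k$ and in-forest weights $\sigma_k$. Then for every $k=0,1,2,\dots$, $$Q_k=\sum_{i=0}^{k}\sigma_{k-i}(-L)^i.$$
   Context: $W=(w_{ij})$ is the matrix of arc weights ($w_{ij}>0$ iff there is an arc $i\to j$, else $0$). The Laplacian $L=(\ell_{ij})$: $\ell_{ij}=-w_{ij}$ for $j\ne i$, $\ell_{ii}=\sum_{k\ne i}w_{ik}$. The weight of a subgraph is the product of its arc weights (1 if no arcs); the weight of a set of subgraphs is the sum of their weights (0 for the empty set). A converging tree is a weakly connected digraph with one vertex (the root) of outdegree 0 and all others of outdegree 1; an in-forest is a spanning subgraph of $\Gamma$ whose weak components are converging trees. $\sigma_k$ is the total weight of in-forests of $\Gamma$ with $k$ arcs ($\sigma_0=1$). $Q_k=(q^k_{ij})$ where $q^k_{ij}$ is the total weight of in-forests with $k$ arcs in which $i$ lies in a tree rooted at $j$ ($Q_0=I$). *)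

From mathcomp Require Import all_boot all_order all_algebra.
Set Implicit Arguments. Unset Strict Implicit. Unset Printing Implicit Defensive.
Import Order.TTheory GRing.Theory Num.Theory.
Local Open Scope ring_scope.

(* Weighted digraph on vertex set 'I_n given by its weight matrix W:
   there is an arc i -> j iff W i j != 0 (weights are positive on arcs).
   A subgraph (spanning, so on all vertices) is given by its arc set
   A : {set 'I_n * 'I_n}. *)

Section Forests.
Variables (R : realFieldType) (n : nat) (W : 'M[R]_n).

Definition laplacian : 'M[R]_n :=
  \matrix_(i, j) (if i == j then \sum_(k | k != i) W i k else - W i j).

Definition is_arc (a : 'I_n * 'I_n) : bool := W a.1 a.2 != 0.

Definition outdeg (A : {set 'I_n * 'I_n}) (v : 'I_n) : nat :=
  #|[set y | (v, y) \in A]|.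

Definition weak_adj (A : {set 'I_n * 'I_n}) : rel 'I_n :=
  [rel x y | ((x, y) \in A) || ((y, x) \in A)].

Definition wcomp (A : {set 'I_n * 'I_n}) (x : 'I_n) : {set 'I_n} :=
  [set y | connect (weak_adj A) x y].

Definition converging_tree_on (A : {set 'I_n * 'I_n}) (C : {set 'I_n}) : bool :=
  [exists r in C, (outdeg A r == 0%N) &&
     [forall v in C, (v != r) ==> (outdeg A v == 1%N)]].

Definition in_forest (A : {set 'I_n * 'I_n}) : bool :=
  [forall a in A, is_arc a] &&
  [forall x, converging_tree_on A (wcomp A x)].

Definition sweight (A : {set 'I_n * 'I_n}) : R := \prod_(a in A) W a.1 a.2.

Definition rooted_at (A : {set 'I_n * 'I_n}) (i j : 'I_n) : bool :=
  (j \in wcomp A i) && (outdeg A j == 0%N).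

Definition sigma (k : nat) : R :=
  \sum_(A : {set 'I_n * 'I_n} | in_forest A && (#|A| == k)) sweight A.

Definition Qmat (k : nat) : 'M[R]_n :=
  \matrix_(i, j) \sum_(A : {set 'I_n * 'I_n} |
      [&& in_forest A, #|A| == k & rooted_at A i j]) sweight A.

End Forests.

From mathcomp Require Import all_boot all_order all_algebra.
Set Implicit Arguments. Unset Strict Implicit. Unset Printing Implicit Defensive.
Import Order.TTheory GRing.Theory Num.Theory.

(* Encode an in-forest by its parent map g, roots being the fixed points.
   Then Q_0 = sigma_0 I, and the theorem unrolls the recurrence
   Q_(k+1) = sigma_(k+1) I - Q_k L, which entrywise reads
     Q_(k+1)(i,j) + Q_k(i,j) L(j,j)
       = sigma_(k+1) [i = j] + sum_(m <> j) Q_k(i,m) w(m,j).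
   Every product term is a forest with k arcs extended by one arc, i.e. a map
   g with k+1 arcs, and each such g is counted equally often on both sides.
   If g is a forest, it is counted once on each side when i reaches j (on the
   right through the last arc m -> j of the path, or as a diagonal term when
   i = j) and never otherwise. If g has a cycle, deleting an arc leaves a
   forest only for the arcs of that unique cycle, and g is counted on the left
   iff i reaches j and j lies on the cycle, exactly when the arc entering j
   along the cycle is counted on the right. *)

Section FunctionalGraph.
Variable T : finType.
Implicit Types (f h : T -> T) (D : pred T) (m r x y z : T).

Lemma fconnectP f x y : reflect (exists t, iter t f x = y) (fconnect f x y).
Proof.
apply: (iffP idP) => [xy|[t <-]]; last exact: fconnect_iter.
by exists (findex f x y); apply: iter_findex.
Qed.

Lemma fconnect_fix f r y : f r = r -> fconnect f r y -> y = r.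
Proof. by move=> fr /fconnectP[t <-]; rewrite iter_fix. Qed.

Lemma fconnect_next f x y : fconnect f x y -> x != y -> fconnect f (f x) y.
Proof.
move=> /fconnectP[[|t] <-]; first by rewrite eqxx.
by rewrite iterSr => _; apply/fconnectP; exists t.
Qed.

Lemma fconnect_total f x y z :
  fconnect f x y -> fconnect f x z -> fconnect f y z || fconnect f z y.
Proof.
move=> /fconnectP[t <-]; elim: t x => [|t IHt] x xz; first by rewrite /= xz.
case: (eqVneq x z) => [<-|nxz]; first by rewrite fconnect_iter orbT.
by rewrite iterSr; apply: IHt; apply: fconnect_next.
Qed.

Lemma fconnect_last f x y : fconnect f x y -> x != y ->
  exists m, [/\ m != y, f m = y & fconnect f x m].
Proof.
move=> /fconnectP[t]; elim: t x => [|t IHt] x; first by move=> /= ->; rewrite eqxx.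
rewrite iterSr => fxy nxy; case: (eqVneq (f x) y) => [fx_y|nfxy].
  by exists x; split; rewrite ?connect0.
have [m [my fm fxm]] := IHt _ fxy nfxy.
by exists m; split=> //; apply: connect_trans fxm; apply: fconnect1.
Qed.

(* The f-orbit of x up to its first point in D is also an h-orbit. *)
Lemma fconnect_hit D f h x y : (forall v, ~~ D v -> h v = f v) ->
  fconnect f x y -> D y -> exists2 d, D d & fconnect h x d.
Proof.
move=> hf /fconnectP[t <-]; elim: t x => [|t IHt] x.
  by exists x; rewrite ?connect0.
case Dx: (D x); first by exists x; rewrite ?connect0.
rewrite iterSr => /IHt[d Dd hd]; exists d => //.
by apply: connect_trans hd; rewrite -hf ?Dx // fconnect1.
Qed.

Lemma fconnect_agree_to f h m x : (forall v, v != m -> h v = f v) ->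
  fconnect f x m -> fconnect h x m.
Proof.
move=> hf fxm.
by have [d /eqP ->] := @fconnect_hit (pred1 m) f h x m hf fxm (eqxx m).
Qed.

Lemma fconnect_agree f h m x y : (forall v, v != m -> h v = f v) ->
  fconnect f x y -> fconnect h x y || fconnect h x m.
Proof.
move=> hf fxy; have hf2 v : ~~ pred2 y m v -> h v = f v.
  by case/norP=> _; apply: hf.
have [|d /orP[]/eqP-> ->] := @fconnect_hit (pred2 y m) f h x y hf2 fxy.
- by rewrite /= eqxx.
- by [].
- by rewrite orbT.
Qed.

End FunctionalGraph.

Section ParentMaps.
Variable T : finType.
Implicit Types (g : {ffun T -> T}) (a b m r v x : T).

(* g is the parent map of an in-forest: every vertex reaches a fixed point. *)
Definition acyclic g := [forall v, [exists r, fconnect g v r && (g r == r)]].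

Lemma acyclicP g :
  reflect (forall v, exists2 r, fconnect g v r & g r = r) (acyclic g).
Proof.
apply: (iffP forallP) => [gP v|gP v].
  by have /existsP[r /andP[vr /eqP]] := gP v; exists r.
by have [r vr gr] := gP v; apply/existsP; exists r; rewrite vr gr eqxx.
Qed.

Lemma acyclic_cycle g x : acyclic g -> fconnect g (g x) x -> g x = x.
Proof.
move=> /acyclicP/(_ x)[r xr gr] gxx.
suff back u : fconnect g x u -> fconnect g u x by rewrite (fconnect_fix gr (back r xr)).
move=> /fconnectP[t <-]; elim: t => [|t IHt]; first exact: connect0.
rewrite iterS; case: (eqVneq (iter t g x) x) => [->|ne]; first exact: gxx.
exact: fconnect_next.
Qed.

(* [redirect g m m] deletes the arc out of m, making m a root. *)
Definition redirect g a b : {ffun T -> T} := [ffun v => if v == a then b else g v].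

Lemma redirect_at g a b : redirect g a b a = b.
Proof. by rewrite ffunE eqxx. Qed.

Lemma redirect_off g a b v : v != a -> redirect g a b v = g v.
Proof. by rewrite ffunE => /negbTE ->. Qed.
Arguments redirect_off : clear implicits.

Lemma redirectK g a b : g a = b -> redirect g a b = g.
Proof. by move=> gab; apply/ffunP => v; rewrite ffunE; case: eqP => // ->. Qed.

Lemma redirect_redirect g a b c : redirect (redirect g a b) a c = redirect g a c.
Proof. by apply/ffunP => v; rewrite !ffunE; case: eqP. Qed.

Lemma fconnect_detach g m x : fconnect (redirect g m m) x m = fconnect g x m.
Proof.
by apply/idP/idP; apply: fconnect_agree_to => v vm; rewrite redirect_off.
Qed.

Lemma acyclic_detachP g m : reflect
  (forall v, fconnect g v m \/ exists2 r, fconnect g v r & g r = r)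
  (acyclic (redirect g m m)).
Proof.
apply: (iffP (acyclicP _)) => [dP v|gP v].
  have [r] := dP v; case: (eqVneq r m) => [-> vm _|rm vr].
    by left; rewrite -fconnect_detach.
  rewrite redirect_off // => gr.
  have /orP[vr'|vm] := fconnect_agree (fun u um => esym (redirect_off g m m u um)) vr.
    by right; exists r.
  by left.
case: (gP v) => [vm|[r vr gr]].
  by exists m; rewrite ?fconnect_detach ?redirect_at.
have /orP[vr'|vm] := fconnect_agree (redirect_off g m m) vr.
  by exists r => //; case: (eqVneq r m) => [->|rm]; rewrite ?redirect_at ?redirect_off.
by exists m; rewrite ?redirect_at.
Qed.

Lemma acyclic_detach g m : acyclic g -> acyclic (redirect g m m).
Proof. by move=> /acyclicP gP; apply/acyclic_detachP => v; right. Qed.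

Lemma acyclic_detach_trans g a b :
  acyclic (redirect g a a) -> fconnect g a b -> acyclic (redirect g b b).
Proof.
move=> /acyclic_detachP aP ab; apply/acyclic_detachP => v.
by case: (aP v) => [va|]; [left; apply: connect_trans ab | right].
Qed.

Lemma acyclic_detach_root g m r :
  acyclic (redirect g m m) -> fconnect g (g m) r -> g r = r -> acyclic g.
Proof.
move=> /acyclic_detachP mP gmr gr; apply/acyclicP => v.
case: (mP v) => [vm|//]; exists r => //.
by apply: connect_trans gmr; apply: connect_trans vm (fconnect1 _ _).
Qed.

Lemma detach_cycle g m :
  acyclic (redirect g m m) -> ~~ acyclic g -> fconnect g (g m) m.
Proof.
move=> mA; apply: contraNT => gm_m.
have /acyclic_detachP/(_ (g m))[gmm|[r gmr gr]] := mA.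
  by rewrite gmm in gm_m.
exact: acyclic_detach_root gmr gr.
Qed.

Definition arcs g : {set T * T} := [set (v, g v) | v in [set v | g v != v]].

Definition parent (A : {set T * T}) : {ffun T -> T} :=
  [ffun v => odflt v [pick y | (v, y) \in A]].

Lemma mem_arcs g x y : ((x, y) \in arcs g) = (g x != x) && (g x == y).
Proof.
apply/imsetP/andP => [[v]|[gx /eqP <-]]; last by exists x; rewrite ?inE.
by rewrite inE => gv [-> ->].
Qed.

Lemma arcsK : cancel arcs parent.
Proof.
move=> g; apply/ffunP => v; rewrite ffunE; case: pickP => [y|none] /=.
  by rewrite mem_arcs => /andP[_ /eqP].
case: (eqVneq (g v) v) => [-> //|gv].
by have := none (g v); rewrite mem_arcs gv eqxx.
Qed.

Lemma arcs_redirect g a b : g a = a -> a != b ->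
  arcs (redirect g a b) = (a, b) |: arcs g.
Proof.
move=> ga ab; apply/setP => -[x y]; rewrite in_setU1 !mem_arcs xpair_eqE.
case: (eqVneq x a) => [->|xa]; last by rewrite redirect_off.
by rewrite redirect_at ga eqxx orbF eq_sym ab eq_sym.
Qed.

Lemma card_arcs0 g : #|arcs g| = 0 -> forall v, g v = v.
Proof.
move/eqP; rewrite cards_eq0 => /eqP a0 v; apply/eqP/negPn/negP => gv.
by have := mem_arcs g v (g v); rewrite a0 inE gv eqxx.
Qed.

Lemma card_arcs_detach g m : g m != m ->
  #|arcs g| = #|arcs (redirect g m m)|.+1.
Proof.
move=> gm; rewrite -{1}(@redirectK g m (g m)) // -(redirect_redirect g m m).
by rewrite arcs_redirect ?redirect_at 1?eq_sym // cardsU1 mem_arcs redirect_at eqxx.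
Qed.

End ParentMaps.

Section LastArc.
Variables (T : finType) (g : {ffun T -> T}) (i j : T).

(* m -> j is the last arc of the path from i to j, and deleting it leaves
   a forest. *)
Definition last_arc m :=
  [&& m != j, g m == j, acyclic (redirect g m m) & fconnect g i m].

Lemma last_arc_uniq m1 m2 : last_arc m1 -> last_arc m2 -> m1 = m2.
Proof.
move=> /and4P[m1j /eqP gm1 A1 im1] /and4P[m2j /eqP gm2 A2 im2].
apply/eqP/negPn/negP => m12.
have no_return ma mb : acyclic (redirect g ma ma) -> mb != ma -> mb != j ->
    g mb = j -> ~~ fconnect (redirect g ma ma) j mb.
  move=> Aa mba mbj gmb; apply/negP => jmb.
  have := acyclic_cycle (x := mb) Aa; rewrite redirect_off // gmb => /(_ jmb) jb.
  by rewrite jb eqxx in mbj.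
pose h := redirect (redirect g m1 m1) m2 m2.
have hg v : ~~ pred2 m1 m2 v -> h v = g v.
  by case/norP=> v1 v2; rewrite !redirect_off.
have j_hits : fconnect g j m1 || fconnect g j m2.
  case/orP: (fconnect_total im1 im2) => [m1m2|m2m1].
    by rewrite -gm1 (fconnect_next m1m2 m12) orbT.
  by rewrite -gm2 (fconnect_next m2m1) // eq_sym.
have [d /orP[]/eqP-> jd] : exists2 d, pred2 m1 m2 d & fconnect h j d.
  by case/orP: j_hits => jm; apply: fconnect_hit hg jm _; rewrite /= eqxx ?orbT.
- apply: (negP (no_return _ _ A2 m12 m1j gm1)).
  by apply: fconnect_agree_to jd => v vm1; rewrite /h !ffunE (negbTE vm1).
- apply: (negP (no_return _ _ A1 _ m2j gm2)); first by rewrite eq_sym.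
  by apply: fconnect_agree_to jd => v vm2; rewrite /h [RHS]redirect_off.
Qed.

Lemma card_last_arc : #|last_arc| = [exists m, last_arc m].
Proof.
case: existsP => [[m mP]|none].
  by apply/eqP; rewrite eqn_leq; apply/andP; split;
    [apply/card_le1_eqP => m1 m2 /last_arc_uniq h /h | apply/card_gt0P; exists m].
by apply: eq_card0 => m; apply/negP => mP; apply: none; exists m.
Qed.

Lemma last_arc_acyclic : acyclic g ->
  [exists m, last_arc m] = fconnect g i j && (i != j).
Proof.
move=> gA; apply/existsP/andP => [[m /and4P[mj /eqP gm _ im]]|[ij nij]].
  have ij : fconnect g i j by rewrite -gm (connect_trans im (fconnect1 _ _)).
  split=> //; apply: contraTneq im => ->; apply/negP => jm.
  have := acyclic_cycle (x := m) gA; rewrite gm => /(_ jm) jm_eq.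
  by rewrite jm_eq eqxx in mj.
have [m [mj gm im]] := fconnect_last ij nij.
by exists m; rewrite /last_arc mj gm eqxx acyclic_detach.
Qed.

Lemma last_arc_cyclic : ~~ acyclic g ->
  [exists m, last_arc m] = [&& g j != j, acyclic (redirect g j j) & fconnect g i j].
Proof.
move=> gC; apply/existsP/and3P => [[m /and4P[mj /eqP gm mA im]]|[gj jA ij]].
  have mj' : fconnect g m j by rewrite -gm fconnect1.
  split; last exact: connect_trans im mj'.
    apply: contraNneq gC => gjj.
    by apply: (acyclic_detach_root mA) gjj; rewrite gm connect0.
  exact: acyclic_detach_trans mA mj'.
have [m [mj gm gjm]] := fconnect_last (detach_cycle jA gC) gj.
have jm : fconnect g j m := connect_trans (fconnect1 _ _) gjm.
exists m; rewrite /last_arc mj gm eqxx (acyclic_detach_trans jA jm).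
exact: connect_trans ij jm.
Qed.

Lemma last_arc_count :
  ([&& acyclic g, fconnect g i j & g j == j] : nat)
    + [&& g j != j, acyclic (redirect g j j) & fconnect g i j]
  = ((i == j) && acyclic g : nat) + #|last_arc|.
Proof.
rewrite card_last_arc; have [gA|gC] := boolP (acyclic g).
  rewrite last_arc_acyclic // acyclic_detach //=.
  case: (eqVneq i j) => [<-|_]; first by rewrite connect0; case: eqP.
  by case: (fconnect g i j); case: eqP.
by rewrite last_arc_cyclic // andbF.
Qed.

End LastArc.

Section ForestsAsParentMaps.
Variable n : nat.
Implicit Types (g : {ffun 'I_n -> 'I_n}) (i j r v x y : 'I_n).

Lemma outdeg_arcs g v : outdeg (arcs g) v = (g v != v).
Proof.
rewrite /outdeg; case: (eqVneq (g v) v) => gv.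
  by apply/eqP; rewrite cards_eq0; apply/eqP/setP => y; rewrite !inE mem_arcs gv eqxx.
rewrite (eq_card (B := pred1 (g v))) ?card1 // => y.
by rewrite !inE mem_arcs gv eq_sym.
Qed.

Lemma fconnect_weak g x y : fconnect g x y -> connect (weak_adj (arcs g)) x y.
Proof.
apply: connect_sub => u _ /eqP <-; case: (eqVneq (g u) u) => [->|gu].
  exact: connect0.
by apply: connect1; rewrite /weak_adj /= mem_arcs gu eqxx.
Qed.

Lemma weak_fconnect_root g r x y : g r = r ->
  connect (weak_adj (arcs g)) x y -> fconnect g x r = fconnect g y r.
Proof.
move=> gr; apply: (@closed_connect _ _ [pred u | fconnect g u r]) => u v.
have step w : g w != w -> fconnect g w r = fconnect g (g w) r.
  move=> gw; apply/idP/idP => [wr|]; last exact: connect_trans (fconnect1 _ _).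
  by apply: fconnect_next wr _; apply: contra_neq gw => ->.
by rewrite /weak_adj /= !mem_arcs => /orP[]/andP[gw /eqP <-]; rewrite !inE (step _ gw).
Qed.

Lemma rooted_at_arcs g i j : rooted_at (arcs g) i j = fconnect g i j && (g j == j).
Proof.
rewrite /rooted_at /wcomp inE outdeg_arcs; case: (eqVneq (g j) j) => [gj|] /=;
  last by rewrite !andbF.
rewrite !andbT; apply/idP/idP; last exact: fconnect_weak.
by move=> /(weak_fconnect_root gj) ->; rewrite connect0.
Qed.

Lemma converging_arcs g :
  [forall x, converging_tree_on (arcs g) (wcomp (arcs g) x)] = acyclic g.
Proof.
apply/forallP/acyclicP => [gP x|gP x].
  have /existsP[r /and3P[]] := gP x; rewrite inE outdeg_arcs eqb0 negbK => xr /eqP gr _.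
  by exists r; rewrite // (weak_fconnect_root gr xr) connect0.
have [r xr gr] := gP x; apply/existsP; exists r.
rewrite inE (fconnect_weak xr) outdeg_arcs eqb0 gr eqxx /=.
apply/forall_inP => v; rewrite inE => xv; apply/implyP => vr.
rewrite outdeg_arcs eqb1; apply: contraNT vr => /negPn/eqP gv.
by rewrite -(fconnect_fix gv (_ : fconnect g v r)) // -(weak_fconnect_root gr xv).
Qed.

End ForestsAsParentMaps.

Local Open Scope ring_scope.

Section WeightedForests.
Variables (R : realFieldType) (n : nat) (W : 'M[R]_n).
Hypothesis W_loopfree : forall i, W i i = 0.
Implicit Types (A : {set 'I_n * 'I_n}) (g : {ffun 'I_n -> 'I_n}) (i j m y : 'I_n).
Local Notation wt g := (sweight W (arcs g)).

Lemma sweight_setU1 A a : a \notin A -> sweight W (a |: A) = W a.1 a.2 * sweight W A.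
Proof. exact: big_setU1. Qed.

Lemma sweight_eq0 A : ~~ [forall a in A, is_arc W a] -> sweight W A = 0.
Proof.
case/forall_inPn => a aA /negPn/eqP Wa.
by rewrite /sweight (bigD1 a) //= Wa mul0r.
Qed.

Lemma arcs_parent A : in_forest W A -> arcs (parent A) = A.
Proof.
case/andP=> /forall_inP arcsW /forallP trees.
have outdeg_le1 x : (outdeg A x <= 1)%N.
  have /existsP[r /andP[_ /andP[/eqP r0 /forall_inP others]]] := trees x.
  have [-> | xr] := eqVneq x r; first by rewrite r0.
  have xx : x \in wcomp A x by rewrite inE connect0.
  by have /implyP/(_ xr)/eqP-> := others x xx.
apply/setP => -[x y]; rewrite mem_arcs ffunE.
case: pickP => [z xz|none] /=; last by rewrite eqxx /= none.
have -> : z != x.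
  by apply: contraTneq (arcsW _ xz) => ->; rewrite /is_arc W_loopfree eqxx.
apply/eqP/idP => [<- //|xy].
by apply: (card_le1_eqP (outdeg_le1 x)); rewrite inE.
Qed.

(* Parent maps using an arc of weight 0 contribute 0, so the arc condition of
   [in_forest] can be dropped. *)
Lemma sum_forests (X : pred {set 'I_n * 'I_n}) :
  \sum_(A | in_forest W A && X A) sweight W A =
  \sum_(g | acyclic g && X (arcs g)) wt g.
Proof.
rewrite (reindex_onto (@arcs _) (@parent _)) => [|A /andP[/arcs_parent //]].
rewrite big_mkcond [RHS]big_mkcond; apply: eq_bigr => g _.
rewrite arcsK eqxx andbT /in_forest converging_arcs.
have [//|arcsW] := boolP [forall a in arcs g, is_arc W a].
by rewrite sweight_eq0 //; case: ifP.
Qed.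

Lemma sigma_parent k : sigma W k = \sum_(g | acyclic g && (#|arcs g| == k)) wt g.
Proof. exact: (sum_forests (fun A => #|A| == k)). Qed.

Lemma Qmat_parent k i j : Qmat W k i j =
  \sum_(g | [&& acyclic g, #|arcs g| == k, fconnect g i j & g j == j]) wt g.
Proof.
rewrite mxE (sum_forests (fun A => (#|A| == k) && rooted_at A i j)).
by apply: eq_bigl => g; rewrite rooted_at_arcs.
Qed.

Lemma sum_attach_arc (P : pred {ffun 'I_n -> 'I_n}) a b : a != b ->
  \sum_(f | P f && (f a == a)) wt f * W a b =
  \sum_(g | P (redirect g a a) && (g a == b)) wt g.
Proof.
move=> ab.
rewrite [RHS](reindex_onto (fun f => redirect f a b) (fun g => redirect g a a));
  last first.
  by move=> g /andP[_ /eqP gab]; rewrite redirect_redirect redirectK.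
apply: eq_big => [f|f /andP[_ /eqP fa]].
  rewrite redirect_redirect redirect_at eqxx andbT.
  case: (eqVneq (f a) a) => [fa|fa]; first by rewrite redirectK ?eqxx.
  suff -> : (redirect f a a == f) = false by rewrite !andbF.
  apply/negbTE; apply: contra_neq fa => /ffunP/(_ a).
  by rewrite redirect_at => <-.
by rewrite arcs_redirect // sweight_setU1 1?mulrC // mem_arcs fa eqxx.
Qed.

Lemma Qmat_mul_weight k i m y : m != y ->
  Qmat W k i m * W m y = \sum_(g | #|arcs g| == k.+1)
    wt g *+ [&& g m == y, acyclic (redirect g m m) & fconnect g i m].
Proof.
move=> my; rewrite Qmat_parent mulr_suml.
pose P f := [&& acyclic f, #|arcs f| == k & fconnect f i m].
rewrite (eq_bigl (fun f => P f && (f m == m))); last by move=> f; rewrite /P !andbA.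
rewrite sum_attach_arc // big_mkcond [RHS]big_mkcond; apply: eq_bigr => g _.
case: (eqVneq (g m) y) => [gm|_]; last by rewrite andbF /= mulr0n if_same.
have gm_m : g m != m by rewrite gm eq_sym.
rewrite andbT /P (card_arcs_detach gm_m) eqSS fconnect_detach.
by case: (acyclic _) (fconnect g i m) (_ == k) => [] [] [].
Qed.

Lemma laplacian_diag j : laplacian W j j = \sum_(y | y != j) W j y.
Proof. by rewrite mxE eqxx. Qed.

Lemma laplacian_offdiag m j : m != j -> laplacian W m j = - W m j.
Proof. by rewrite mxE => /negbTE ->. Qed.

Section Recurrence.
Variables (k : nat) (i j : 'I_n).

Lemma Qmat_succ_entry : Qmat W k.+1 i j =
  \sum_(g | #|arcs g| == k.+1) wt g *+ [&& acyclic g, fconnect g i j & g j == j].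
Proof.
rewrite Qmat_parent (eq_bigl _ _ (fun g => andbCA _ _ _)) big_mkcondr.
by apply: eq_bigr => g _; rewrite mulrb.
Qed.

Lemma sigma_succ_entry : sigma W k.+1 * (i == j)%:R =
  \sum_(g | #|arcs g| == k.+1) wt g *+ ((i == j) && acyclic g).
Proof.
rewrite sigma_parent (eq_bigl _ _ (fun g => andbC _ _)) big_mkcondr mulr_suml.
apply: eq_bigr => g _.
by case: (acyclic g); case: (i == j); rewrite ?mulr1 ?mulr0 ?mul0r.
Qed.

Lemma Qmat_diag_laplacian : Qmat W k i j * laplacian W j j =
  \sum_(g | #|arcs g| == k.+1)
    wt g *+ [&& g j != j, acyclic (redirect g j j) & fconnect g i j].
Proof.
rewrite laplacian_diag mulr_sumr.
under eq_bigr => y yj do rewrite Qmat_mul_weight 1?eq_sym //.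
rewrite exchange_big; apply: eq_bigr => g _; rewrite sumrMnr; congr (_ *+ _).
have [gj|gj] := eqVneq (g j) j.
  by rewrite big1 // => y yj; rewrite gj eq_sym (negbTE yj).
rewrite (bigD1 (g j)) //= eqxx big1 ?addn0 // => y /andP[_ ygj].
by rewrite eq_sym (negbTE ygj).
Qed.

Lemma Qmat_offdiag_laplacian : \sum_(m | m != j) Qmat W k i m * W m j =
  \sum_(g | #|arcs g| == k.+1) wt g *+ #|last_arc g i j|.
Proof.
under eq_bigr => m mj do rewrite Qmat_mul_weight //.
rewrite exchange_big; apply: eq_bigr => g _; rewrite sumrMnr; congr (_ *+ _).
rewrite -sum1_card big_mkcond [RHS]big_mkcond; apply: eq_bigr => m _.
by rewrite unfold_in /last_arc; case: (m != j) => //; case: [&& _, _ & _].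
Qed.

End Recurrence.

Lemma Qmat_succ k : Qmat W k.+1 = sigma W k.+1 *: 1%:M - Qmat W k *m laplacian W.
Proof.
apply/matrixP => i j; rewrite [RHS]mxE.
rewrite [X in X + _]mxE [X in _ * X]mxE [X in _ + X]mxE [X in - X]mxE (bigD1 j) //=.
have count : Qmat W k.+1 i j + Qmat W k i j * laplacian W j j =
    sigma W k.+1 * (i == j)%:R + \sum_(m | m != j) Qmat W k i m * W m j.
  rewrite Qmat_succ_entry Qmat_diag_laplacian sigma_succ_entry.
  rewrite Qmat_offdiag_laplacian -!big_split; apply: eq_bigr => g _ /=.
  by rewrite -!mulrnDr last_arc_count.
rewrite (eq_bigr (fun m => - (Qmat W k i m * W m j))); last first.
  by move=> m mj; rewrite laplacian_offdiag // mulrN.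
by rewrite sumrN opprD opprK addrA addrAC -count addrK.
Qed.

Lemma Qmat0 : Qmat W 0 = sigma W 0 *: 1%:M.
Proof.
apply/matrixP => i j; rewrite Qmat_parent sigma_parent !mxE.
have [<-|ij] := eqVneq i j; rewrite ?mulr1 ?mulr0.
  apply: eq_bigl => g; case: (eqVneq #|arcs g| 0) => [/card_arcs0 g1|];
    last by rewrite !andbF.
  by rewrite g1 eqxx connect0 !andbT.
apply: big_pred0 => g; case: (eqVneq #|arcs g| 0) => [/card_arcs0 g1|];
  last by rewrite andbF.
by apply/and4P => -[_ _ /(fconnect_fix (g1 i)) ji _]; rewrite ji eqxx in ij.
Qed.

End WeightedForests.

Theorem proposition6 (R : realFieldType) (n : nat) (hn : (1 < n)%N)
    (W : 'M[R]_n)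
    (hpos : forall i j, 0 <= W i j)
    (hloop : forall i, W i i = 0)
    (k : nat) :
  Qmat W k = \sum_(i < k.+1) sigma W (k - i) *: (- laplacian W) ^+ i.
Proof.
elim: k => [|k IHk].
  by rewrite big_ord1 subn0 expr0 -idmxE; apply: Qmat0.
rewrite (Qmat_succ hloop) IHk [RHS]big_ord_recl subn0 expr0 idmxE.
rewrite mulmxE -mulrN mulr_suml; congr (_ + _); apply: eq_bigr => i _.
by rewrite -mulmxE -scalemxAl mulmxE -exprSr lift0 subSS.
Qed.
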